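(* Let $\mathbf{c},\mathbf{d}$ be (possibly empty) real parameter vectors such that the kernel $K(\mu,n)=\dfrac{(\mathbf{c}+\mu)_n}{(\mathbf{d}+\mu)_n}$ is sign regular of order $3$ on $(0,\infty)\times\mathbb{N}_0$. Let $\mathbf{a}_1,\mathbf{a}_2,\mathbf{b}_1,\mathbf{b}_2$ be positive parameter vectors, let $x>0$, and assume the hypergeometric series below converge with non-vanishing denominator. Let $\mathbf{a}=(\mathbf{a}_1,\mathbf{a}_2)=(a_1,\dots,a_m)$ and $\mathbf{b}=(\mathbf{b}_1,\mathbf{b}_2)=(b_1,\dots,b_n)$ satisfy $m\le n$ and $$\frac{e_n(\mathbf{b})}{e_m(\mathbf{a})}\le\frac{e_{n-1}(\mathbf{b})}{e_{m-1}(\mathbf{a})}\le\dots\le\frac{e_{n-m+1}(\mathbf{b})}{e_1(\mathbf{a})}\le e_{n-m}(\mathbf{b}).$$ Then the function $$F(\mu)=\frac{{}_pF_q\!\left(\begin{matrix}\mathbf{c}+\mu,\ \mathbf{a}_1\\ \mathbf{d}+\mu,\ \mathbf{b}_1\end{matrix}\,\Big|\,x\right)}{{}_sF_t\!\left(\begin{matrix}\mathbf{c}+\mu,\ \mathbf{b}_2\\ \mathbf{d}+\mu,\ \mathbf{a}_2\end{matrix}\,\Big|\,x\right)}$$ is unimodal on $(0,\infty)$.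
   Context: For a vector $\mathbf{c}=(c_1,\dots,c_r)$, $(\mathbf{c}+\mu)_k=\prod_{i=1}^r(c_i+\mu)_k$ (equal to $1$ if $\mathbf{c}$ is empty), where $(y)_k=y(y+1)\cdots(y+k-1)$ is the Pochhammer symbol; similarly $(\mathbf{a})_k=\prod_i(a_i)_k$. ${}_pF_q$ denotes the generalized hypergeometric series $\sum_{k\ge0}\frac{(\text{top parameters})_k}{(\text{bottom parameters})_k}\frac{x^k}{k!}$, with $p$, $q$, $s$, $t$ the total numbers of top/bottom parameters. $e_j(\mathbf{a})$ is the $j$-th elementary symmetric polynomial of the entries of $\mathbf{a}$ ($e_0=1$). A kernel $K:X\times Y\to\mathbb{R}$ is sign regular of order $3$ if there are signs $\varepsilon_1,\varepsilon_2,\varepsilon_3\in\{\pm1\}$ with $\varepsilon_m\det(K(x_i,y_j))_{i,j=1}^m\ge0$ for $m=1,2,3$ and all $x_1<\dots<x_m$, $y_1<\dots<y_m$. A function is unimodal if it changes its direction of monotonicity at most once. *)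

From HB Require Import structures.
From mathcomp Require Import all_boot all_order all_algebra.
From mathcomp Require Import all_classical all_reals all_analysis.
Set Implicit Arguments. Unset Strict Implicit. Unset Printing Implicit Defensive.
Import Order.TTheory GRing.Theory Num.Theory numFieldNormedType.Exports.
Local Open Scope ring_scope.

Definition poch {R : numFieldType} (y : R) (k : nat) : R :=
  \prod_(i < k) (y + i%:R).

Definition vpoch {R : numFieldType} (c : seq R) (k : nat) : R :=
  \prod_(y <- c) poch y k.

Definition vshift {R : numFieldType} (c : seq R) (mu : R) : seq R :=
  [seq ci + mu | ci <- c].

Definition hypterm {R : numFieldType} (top bot : seq R) (x : R) (k : nat) : R :=
  vpoch top k / vpoch bot k * x ^+ k / (k`!)%:R.

Definition hypconv {R : realType} (top bot : seq R) (x : R) : Prop :=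
  cvgn (series (hypterm top bot x)).

Definition hypF {R : realType} (top bot : seq R) (x : R) : R :=
  limn (series (hypterm top bot x)).

Definition elem_sym {R : numFieldType} (s : seq R) (j : nat) : R :=
  \sum_(I : {set 'I_(size s)} | #|I| == j) \prod_(i in I) s`_i.

Definition sr_order {R : realType} (K : R -> nat -> R) (m : nat) (eps : R) : Prop :=
  forall (xs : 'I_m -> R) (ys : 'I_m -> nat),
    (forall i, 0 < xs i) ->
    (forall i j : 'I_m, (i < j)%N -> xs i < xs j) ->
    (forall i j : 'I_m, (i < j)%N -> (ys i < ys j)%N) ->
    0 <= eps * \det (\matrix_(i < m, j < m) K (xs i) (ys j)).

Definition sign_regular3 {R : realType} (K : R -> nat -> R) : Prop :=
  exists eps1 eps2 eps3 : R,
    [/\ eps1 = 1 \/ eps1 = -1, eps2 = 1 \/ eps2 = -1, eps3 = 1 \/ eps3 = -1 &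
      [/\ sr_order K 1 eps1, sr_order K 2 eps2 & sr_order K 3 eps3]].

(* f is unimodal on (0,oo): it changes its direction of monotonicity at most
   once (t <= 0 covers the globally monotone cases). *)
Definition unimodal_pos {R : realType} (f : R -> R) : Prop :=
  exists t : R,
    ((forall u v, 0 < u -> u <= v -> v <= t -> f u <= f v) /\
     (forall u v, 0 < u -> t <= u -> u <= v -> f v <= f u)) \/
    ((forall u v, 0 < u -> u <= v -> v <= t -> f v <= f u) /\
     (forall u v, 0 < u -> t <= u -> u <= v -> f u <= f v)).

From HB Require Import structures.
From mathcomp Require Import all_boot all_order all_algebra.
From mathcomp Require Import all_classical all_reals all_analysis.
From mathcomp Require Import perm ring lra.
Set Implicit Arguments. Unset Strict Implicit. Unset Printing Implicit Defensive.
Import Order.TTheory GRing.Theory Num.Theory numFieldNormedType.Exports.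
Local Open Scope classical_set_scope.
Local Open Scope ring_scope.

(* Write the ratio as N(mu) / D(mu) with N(mu) = sum_k K(mu,k) A_k and
   D(mu) = sum_k K(mu,k) B_k, where K(mu,k) = (c+mu)_k / (d+mu)_k.  The ratio
   A_k / B_k = (a)_k / (b)_k has quotients prod (a_i + k) / prod (b_i + k); the
   hypothesis on elementary symmetric functions says that the coefficients of
   prod (b_i + t) - prod (a_i + t) change sign at most once, from - to +, so
   (Descartes) this difference stays positive once it is positive, and every
   superlevel set of k |-> A_k / B_k is an interval.  Hence h_k = A_k - lam B_k
   has sign pattern (-, +, -) in k.  Splitting h into three nonnegative weights
   with ordered supports, the composition formula makes
   G_ij = sum_k K(mu_i,k) W_j(k) sign-regular of order 3 with the signs e2, e3
   of K, and such a 3x3 matrix cannot have alternating row sums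
   -G_i0 + G_i1 - G_i2 with signs e2 e3 (+, -, +).  So e2 e3 (N - lam D) never
   takes the signs (+, -, +) at mu0 < mu1 < mu2: e2 e3 N / D has no strict
   valley, and being continuous it is unimodal. *)

Section ElementarySymmetric.
Variable R : numFieldType.
Implicit Types (s : seq R) (t : R).

Lemma prod_addr_elem_sym s t :
  \prod_(y <- s) (y + t) = \sum_(j < (size s).+1) elem_sym s j * t ^+ (size s - j).
Proof.
rewrite (big_nth 0) big_mkord bigA_distr.
under eq_bigr => J _.
  rewrite (bigID (mem J)) /=.
  rewrite (eq_bigr (fun i : 'I_(size s) => s`_i)); last by move=> i ->.
  rewrite (eq_bigr (fun=> t)); last by move=> i /negbTE ->.
  rewrite prodr_const.
  over.
under [RHS]eq_bigr => j _ do rewrite /elem_sym mulr_suml.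
rewrite (exchange_big_dep xpredT) //=; apply: eq_bigr => J _.
have cardJ : (#|J| < (size s).+1)%N by rewrite ltnS (leq_trans (max_card _)) ?card_ord.
rewrite (big_pred1 (Ordinal cardJ)); last by move=> j /=; rewrite eq_sym.
congr (_ * t ^+ _); rewrite /= -[X in (X - _)%N](card_ord (size s)) -(cardC (mem J)) addKn.
by apply: eq_card => i; rewrite !inE.
Qed.

Lemma prod_addr_elem_sym_rev s t :
  \prod_(y <- s) (y + t) = \sum_(i < (size s).+1) elem_sym s (size s - i) * t ^+ i.
Proof.
rewrite prod_addr_elem_sym (reindex_inj rev_ord_inj) /=; apply: eq_bigr => i _.
by rewrite subSS subKn // -ltnS.
Qed.

Lemma elem_sym_ge0 s j : all (>= 0) s -> 0 <= elem_sym s j.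
Proof.
move=> /allP s_ge0; apply: sumr_ge0 => I _; apply: prodr_ge0 => i _.
exact/s_ge0/mem_nth.
Qed.

Lemma elem_sym_gt0 s j : all (> 0) s -> (j <= size s)%N -> 0 < elem_sym s j.
Proof.
move=> /allP s_gt0 js; rewrite /elem_sym (bigD1 [set widen_ord js i | i : 'I_j]) /=.
  apply: ltr_pwDl; first by apply: prodr_gt0 => i _; exact/s_gt0/mem_nth.
  by apply: sumr_ge0 => I _; apply: prodr_ge0 => i _; exact/ltW/s_gt0/mem_nth.
by rewrite card_imset ?card_ord // => u v /(congr1 val) /= /val_inj.
Qed.

End ElementarySymmetric.

Section SignChange.
Variable R : realFieldType.

(* The cross-multiplied form of: t |-> p(t) / t ^+ j0 is nondecreasing on t >= 0
   when the coefficients of p are <= 0 below j0 and >= 0 from j0 on. *)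
Lemma sum_powr_cross_le n (c : nat -> R) j0 t t' :
  (forall i, (i < j0)%N -> c i <= 0) -> (forall i, (j0 <= i < n)%N -> 0 <= c i) ->
  0 <= t <= t' ->
  (\sum_(i < n) c i * t ^+ i) * t' ^+ j0 <= (\sum_(i < n) c i * t' ^+ i) * t ^+ j0.
Proof.
move=> c_le0 c_ge0 /andP[t_ge0 tt']; have t'_ge0 := le_trans t_ge0 tt'.
have cross k l : (k <= l)%N -> t ^+ l * t' ^+ k <= t' ^+ l * t ^+ k.
  move=> kl; rewrite -(subnKC kl) !exprD mulrAC [t' ^+ k * _ * _]mulrAC.
  rewrite [t' ^+ k * _]mulrC ler_wpM2l ?mulr_ge0 ?exprn_ge0 //.
  exact: lerXn2r.
rewrite !mulr_suml; apply: ler_sum => i _; rewrite -!mulrA.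
have [ij0|j0i] := ltnP i j0.
  by rewrite ler_wnM2l ?c_le0 // mulrC [t ^+ i * _]mulrC cross // ltnW.
by rewrite ler_wpM2l ?cross // c_ge0 // j0i ltn_ord.
Qed.

Lemma sum_powr_gt0_mono n (c : nat -> R) t t' :
  (forall i, (i < n)%N -> 0 <= c i -> 0 <= c i.+1) ->
  0 <= t <= t' -> 0 < \sum_(i < n.+1) c i * t ^+ i -> 0 < \sum_(i < n.+1) c i * t' ^+ i.
Proof.
move=> c_up tt' p_gt0; have /andP[t_ge0 let'] := tt'.
pose j0 := find (fun i => 0 <= c i) (iota 0 n.+1).
have c_le0 i : (i < j0)%N -> c i <= 0.
  move=> ij0; have := before_find 0%N ij0.
  have ilt : (i < n.+1)%N by rewrite -[n.+1](size_iota 0) (leq_trans ij0) ?find_size.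
  by rewrite nth_iota // add0n => /negbT; rewrite -ltNge => /ltW.
have c_j0 : (j0 < n.+1)%N -> 0 <= c j0.
  move=> j0n; have has_ge0 : has (fun i => 0 <= c i) (iota 0 n.+1).
    by rewrite has_find size_iota.
  by have := nth_find 0%N has_ge0; rewrite -/j0 nth_iota // add0n.
have c_ge0 i : (j0 <= i < n.+1)%N -> 0 <= c i.
  elim: i => [|i IH] /andP[j0i ilt].
    by move: j0i ilt; rewrite leqn0 => /eqP <-; exact: c_j0.
  have [j0E|j0i'] := eqVneq j0 i.+1; first by rewrite -j0E c_j0 ?j0E.
  apply: c_up => //; apply: IH.
  by rewrite (ltn_trans (ltnSn i) ilt) andbT -ltnS ltn_neqAle j0i' j0i.
have [<-//|tt'ne] := eqVneq t t'.
have t'_gt0 : 0 < t' by rewrite (le_lt_trans t_ge0) // lt_neqAle tt'ne let'.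
rewrite ltNge; apply/negP => p'_le0.
have : (\sum_(i < n.+1) c i * t ^+ i) * t' ^+ j0 <= 0.
  apply: le_trans (sum_powr_cross_le c_le0 c_ge0 tt') _.
  exact: mulr_le0_ge0 p'_le0 (exprn_ge0 _ t_ge0).
by rewrite leNgt mulr_gt0 ?exprn_gt0.
Qed.

End SignChange.

Section Pochhammer.
Variable R : numFieldType.
Implicit Types (s : seq R) (k : nat).

Lemma vpoch0 s : vpoch s 0 = 1.
Proof. by rewrite /vpoch big1 // => y _; rewrite /poch big_ord0. Qed.

Lemma vpochS s k : vpoch s k.+1 = vpoch s k * \prod_(y <- s) (y + k%:R).
Proof. by rewrite /vpoch -big_split; apply: eq_bigr => y _; rewrite /poch big_ord_recr. Qed.

Lemma vpoch_cat s1 s2 k : vpoch (s1 ++ s2) k = vpoch s1 k * vpoch s2 k.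
Proof. exact: big_cat. Qed.

Lemma vpoch_gt0 s k : all (> 0) s -> 0 < vpoch s k.
Proof.
move=> /allP s_gt0; rewrite /vpoch big_seq; apply: prodr_gt0 => y /s_gt0 y_gt0.
by apply: prodr_gt0 => i _; rewrite ltr_wpDr.
Qed.

Definition vpoch_ratio (a b : seq R) k := vpoch a k / vpoch b k.

End Pochhammer.

Lemma exists_descent (R : realFieldType) (f : nat -> R) i j :
  (i <= j)%N -> f j < f i -> exists2 k, (i <= k < j)%N & f k.+1 < f k.
Proof.
elim: j => [|j IH]; first by rewrite leqn0 => /eqP ->; rewrite ltxx.
rewrite leq_eqVlt => /predU1P[-> |]; first by rewrite ltxx.
rewrite ltnS => ij fji; have [fjS|fj] := ltrP (f j.+1) (f j).
  by exists j; rewrite ?ij ?ltnSn.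
have [k /andP[ik kj] fk] := IH ij (le_lt_trans fj fji).
by exists k; rewrite ?ik ?(ltn_trans kj).
Qed.

Section PochhammerRatio.
Variables (R : realFieldType) (a b : seq R).
Hypotheses (a_gt0 : all (> 0) a) (b_gt0 : all (> 0) b) (size_ab : (size a <= size b)%N).
Hypothesis elem_sym_ratio_mono : forall k, (k < size a)%N ->
  elem_sym b (size b - k) / elem_sym a (size a - k)
  <= elem_sym b (size b - k.+1) / elem_sym a (size a - k.+1).

Let diff_coef i :=
  elem_sym b (size b - i) - (if (i <= size a)%N then elem_sym a (size a - i) else 0).

Lemma prod_addr_diff t : \prod_(y <- b) (y + t) - \prod_(y <- a) (y + t) =
  \sum_(i < (size b).+1) diff_coef i * t ^+ i.
Proof.
rewrite !prod_addr_elem_sym_rev.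
rewrite (big_ord_widen (size b).+1 (fun i => elem_sym a (size a - i) * t ^+ i)) //.
rewrite [X in _ - X]big_mkcond /= -sumrB; apply: eq_bigr => i _.
by rewrite ltnS /diff_coef; case: ifP; rewrite mulrBl ?mul0r.
Qed.

Lemma diff_coef_up i : (i < size b)%N -> 0 <= diff_coef i -> 0 <= diff_coef i.+1.
Proof.
move=> _; rewrite /diff_coef; case: (leqP i.+1 (size a)) => [ia|_]; last first.
  by rewrite subr0 elem_sym_ge0 // (sub_all _ b_gt0) // => y /ltW.
rewrite (ltnW ia) !subr_ge0.
have ea_gt0 j : 0 < elem_sym a (size a - j) by rewrite elem_sym_gt0 ?leq_subr.
move=> ea_le_eb; have ratio_ge1 : 1 <= elem_sym b (size b - i) / elem_sym a (size a - i).
  by rewrite ler_pdivlMr ?mul1r.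
by have := le_trans ratio_ge1 (elem_sym_ratio_mono ia); rewrite ler_pdivlMr ?mul1r.
Qed.

Lemma prod_addr_diff_gt0_mono t t' : 0 <= t <= t' ->
  0 < \prod_(y <- b) (y + t) - \prod_(y <- a) (y + t) ->
  0 < \prod_(y <- b) (y + t') - \prod_(y <- a) (y + t').
Proof. by rewrite !prod_addr_diff; apply: sum_powr_gt0_mono diff_coef_up. Qed.

Lemma vpoch_ratioS_lt k : (vpoch_ratio a b k.+1 < vpoch_ratio a b k) =
  (0 < \prod_(y <- b) (y + k%:R) - \prod_(y <- a) (y + k%:R)).
Proof.
have prod_gt0 s : all (> 0) s -> 0 < \prod_(y <- s) (y + k%:R).
  by move=> /allP s_gt0; rewrite big_seq prodr_gt0 // => y /s_gt0 y_gt0; rewrite ltr_wpDr.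
rewrite /vpoch_ratio !vpochS invfM mulrACA gtr_pMr ?divr_gt0 ?vpoch_gt0 //.
by rewrite subr_gt0 ltr_pdivrMr ?mul1r ?prod_gt0.
Qed.

Lemma vpoch_ratio_nonincr k i j : (k <= i <= j)%N ->
  vpoch_ratio a b k.+1 < vpoch_ratio a b k -> vpoch_ratio a b j <= vpoch_ratio a b i.
Proof.
move=> /andP[ki ij] /[!vpoch_ratioS_lt] desc_k.
have desc n : vpoch_ratio a b (k + n.+1) <= vpoch_ratio a b (k + n).
  apply/ltW; rewrite addnS vpoch_ratioS_lt.
  by apply: prod_addr_diff_gt0_mono desc_k; rewrite ler0n ler_nat leq_addr.
have := @homo_leq _ (fun n => vpoch_ratio a b (k + n)) (fun x y => y <= x) (@lexx _ _)
  (fun _ _ _ yx zy => le_trans zy yx) desc (i - k)%N (j - k)%N.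
by rewrite !subnKC ?(leq_trans ki) //; apply; rewrite leq_sub2r.
Qed.

Lemma vpoch_ratio_superlevel_convex (lam : R) i j l : (i <= j <= l)%N ->
  lam < vpoch_ratio a b i -> lam < vpoch_ratio a b l -> lam < vpoch_ratio a b j.
Proof.
move=> /andP[ij jl] lam_i lam_l; rewrite ltNge; apply/negP => j_lam.
have [k /andP[ik kj] desc] := exists_descent ij (le_lt_trans j_lam lam_i).
have kjl : (k <= j <= l)%N by rewrite ltnW.
by have := lt_le_trans lam_l (vpoch_ratio_nonincr kjl desc); rewrite ltNge j_lam.
Qed.

End PochhammerRatio.

Section CompositionFormula.
Variable R : comNzRingType.

Lemma det_mx_sum_cols n N (u : 'I_N -> 'I_n -> R) (W : 'I_n -> 'I_N -> R) :
  \det (\matrix_(i, j) \sum_(k < N) u k i * W j k) =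
  \sum_(g : {ffun 'I_n -> 'I_N}) (\prod_j W j (g j)) * \det (\matrix_(i, j) u (g j) i).
Proof.
rewrite {1}/determinant; under eq_bigr => s _.
  rewrite (eq_bigr (fun i => \sum_k u k i * W (s i) k)) => [|i _]; last by rewrite mxE.
  rewrite bigA_distr_bigA /=.
  over.
under [RHS]eq_bigr => g _ do rewrite mulr_sumr.
rewrite exchange_big /=; apply: eq_bigr => s _; rewrite mulr_sumr.
rewrite (reindex (fun g : {ffun 'I_n -> 'I_N} => [ffun i => g (s i)])) /=; last first.
  exists (fun f : {ffun 'I_n -> 'I_N} => [ffun j => f ((s^-1)%g j)]) => g _.
    by apply/ffunP => j; rewrite !ffunE permKV.
  by apply/ffunP => i; rewrite !ffunE permK.
apply: eq_bigr => g _; rewrite mulrCA; congr (_ * _).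
rewrite big_split /= mulrC; congr (_ * _).
  by rewrite [RHS](reindex_inj (@perm_inj _ s)); apply: eq_bigr => i _; rewrite ffunE.
by apply: eq_bigr => i _; rewrite mxE ffunE.
Qed.

End CompositionFormula.

Section ThreeByThree.
Variable R : comNzRingType.
Implicit Types G : nat -> nat -> R.

Definition minor2 G i i' j j' := G i j * G i' j' - G i j' * G i' j.

Definition det3 G :=
  G 0 0 * minor2 G 1 2 1 2 - G 0 1 * minor2 G 1 2 0 2 + G 0 2 * minor2 G 1 2 0 1.

Lemma det_mx22 (A : 'M[R]_2) : \det A = A 0 0 * A 1 1 - A 0 1 * A 1 0.
Proof.
rewrite (expand_det_row _ ord0) !big_ord_recr big_ord0 /= add0r /cofactor !det_mx11 !mxE /=.
have -> : lift ord0 ord0 = 1 :> 'I_2 by apply: val_inj.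
have -> : lift ord_max ord0 = 0 :> 'I_2 by apply: val_inj.
have -> : lift (widen_ord (leqnSn 1) ord_max) ord0 = 1 :> 'I_2 by apply: val_inj.
have -> : widen_ord (leqnSn 1) ord_max = 0 :> 'I_2 by apply: val_inj.
have -> : ord_max = 1 :> 'I_2 by apply: val_inj.
by rewrite !expr0 !expr1 !mul1r mulN1r mulrN.
Qed.

Lemma det_mx33 G : \det (\matrix_(i < 3, j < 3) G i j) = det3 G.
Proof.
rewrite (expand_det_row _ ord0) !big_ord_recr big_ord0 /= add0r /cofactor !det_mx22 !mxE /=.
by rewrite /det3 /minor2 !expr0 !expr1 expr2 /=; ring.
Qed.

End ThreeByThree.

Section SignRegular.
Variable R : realType.
Implicit Types (K : R -> nat -> R) (e : R).

Lemma sr_order_compose n N K e (mu : 'I_n -> R) (W : 'I_n -> 'I_N -> R) :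
  sr_order K n e -> (forall i, 0 < mu i) -> (forall i j : 'I_n, (i < j)%N -> mu i < mu j) ->
  (forall j k, 0 <= W j k) ->
  (forall (j j' : 'I_n) (k k' : 'I_N), (j < j')%N -> W j k != 0 -> W j' k' != 0 -> (k < k')%N) ->
  0 <= e * \det (\matrix_(i, j) \sum_(k < N) K (mu i) k * W j k).
Proof.
move=> srK mu_gt0 mu_incr W_ge0 W_ordered.
rewrite (det_mx_sum_cols (fun k i => K (mu i) k)) mulr_sumr; apply: sumr_ge0 => g _.
have [->|Wg_neq0] := eqVneq (\prod_j W j (g j)) 0; first by rewrite mul0r mulr0.
have W_neq0 j : W j (g j) != 0.
  by apply: contra Wg_neq0 => /eqP W0; rewrite (bigD1 j) //= W0 mul0r.
rewrite mulrCA mulr_ge0 ?prodr_ge0 //; apply: (srK mu (fun j => g j)) => // j j' jj'.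
exact: W_ordered jj' (W_neq0 j) (W_neq0 j').
Qed.

Lemma sr_order1_ge0 K e : sr_order K 1 e -> (e = 1 \/ e = -1) ->
  (forall x, 0 < x -> K x 0 = 1) -> forall x k, 0 < x -> 0 <= K x k.
Proof.
move=> srK e_sign K_0 x k x_gt0.
have sign_K j : 0 <= e * K x j.
  by have := srK (fun=> x) (fun=> j); rewrite det_mx11 mxE; apply=> // -[[|//] ?] [[|//] ?].
case: e_sign => e_val; last by have := sign_K 0%N; rewrite K_0 // e_val mulr1 oppr_ge0 ler10.
by have := sign_K k; rewrite e_val mul1r.
Qed.

Lemma sr_order2_mono K e x y k : sr_order K 2 e ->
  (forall x, 0 < x -> K x 0 = 1) -> 0 < x -> x < y -> 0 <= e * (K y k - K x k).
Proof.
move=> srK K_0 x_gt0 xy; have y_gt0 := lt_trans x_gt0 xy.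
case: k => [|k]; first by rewrite !K_0 // subrr mulr0.
have := srK (fun i => nth 0 [:: x; y] i) (fun j => nth 0%N [:: 0%N; k.+1] j).
rewrite det_mx22 !mxE /= !K_0 // mul1r mulr1; apply.
- by move=> [[|[|]]].
- by move=> [[|[|]]] // ? [[|[|]]].
- by move=> [[|[|]]] // ? [[|[|]]].
Qed.

End SignRegular.

Section AlternatingPattern.
Variable R : realFieldType.
Implicit Types G : nat -> nat -> R.

Definition alt_rowsum G i := - G i 0 + G i 1 - G i 2.

Definition other_two (i : nat) : nat * nat :=
  if i is 0 then (1, 2) else if i is 1 then (0, 2) else (0, 1).

Definition cominor G i j :=
  minor2 G (other_two i).1 (other_two i).2 (other_two j).1 (other_two j).2.

Lemma det3_expand_alt_rowsum G j : (j < 3)%N ->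
  det3 G = - \sum_(i < 3) (-1) ^+ i * alt_rowsum G i * cominor G i j.
Proof.
case: j => [|[|[|//]]] _; rewrite !big_ord_recr big_ord0 /=;
  by rewrite /det3 /cominor /minor2 /alt_rowsum /=; ring.
Qed.

Lemma det3_alt_rowsum_pattern G e2 e3 :
  e2 ^+ 2 = 1 -> e3 ^+ 2 = 1 ->
  (forall i j, (i < 3)%N -> (j < 3)%N -> 0 <= G i j) ->
  (forall i i' j j', (i < i' < 3)%N -> (j < j' < 3)%N -> 0 <= e2 * minor2 G i i' j j') ->
  0 <= e3 * det3 G ->
  ~ (forall i, (i < 3)%N -> 0 < e2 * e3 * (-1) ^+ i * alt_rowsum G i).
Proof.
move=> e2sq e3sq G_ge0 minor_ge0 det_ge0 w_gt0.
pose w i := e2 * e3 * (-1) ^+ i * alt_rowsum G i.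
have e2_neq0 : e2 != 0.
  by apply/eqP => e2_0; move: e2sq; rewrite e2_0 expr0n /= => /esym/eqP; rewrite oner_eq0.
have cominor_ge0 i j : (i < 3)%N -> (j < 3)%N -> 0 <= e2 * cominor G i j.
  by case: i j => [|[|[|//]]] [|[|[|//]]] _ _; apply: minor_ge0.
have det3E j : (j < 3)%N -> e3 * det3 G = - \sum_(i < 3) w i * (e2 * cominor G i j).
  move=> j3; rewrite (det3_expand_alt_rowsum G j3) mulrN mulr_sumr; congr (- _).
  apply: eq_bigr => i _; rewrite /w.
  transitivity (e2 ^+ 2 * (e3 * ((-1) ^+ i * alt_rowsum G i * cominor G i j))); last by ring.
  by rewrite e2sq mul1r.
(* e3 * det3 G >= 0, yet each column expansion writes it as minus a sum of
   nonnegative terms: so all cofactors vanish. *)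
have cominor_eq0 i j : (i < 3)%N -> (j < 3)%N -> cominor G i j = 0.
  move=> i3 j3; have terms_ge0 (k : 'I_3) : true -> 0 <= w k * (e2 * cominor G k j).
    by move=> _; rewrite mulr_ge0 ?cominor_ge0 // ltW // w_gt0.
  have sum_eq0 : \sum_(k < 3) w k * (e2 * cominor G k j) = 0.
    by apply/eqP; rewrite eq_le (sumr_ge0 _ terms_ge0) andbT -oppr_ge0 -(det3E j j3).
  have /eqP := psumr_eq0P terms_ge0 sum_eq0 (i := Ordinal i3) isT.
  have wi_neq0 : w i != 0 by exact: lt0r_neq0 (w_gt0 _ i3).
  by rewrite mulf_eq0 (negbTE wi_neq0) /= mulf_eq0 (negbTE e2_neq0) => /eqP.
have rows01 k : (k < 3)%N -> alt_rowsum G 0 * G 1 k = alt_rowsum G 1 * G 0 k.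
  move: (cominor_eq0 2 0) (cominor_eq0 2 1) (cominor_eq0 2 2).
  rewrite /cominor /minor2 /alt_rowsum /= => /(_ isT isT) m0 /(_ isT isT) m1 /(_ isT isT) m2.
  by case: k => [|[|[|//]]] _; lra.
have row0_eq0 k : (k < 3)%N -> G 0 k = 0.
  move=> k3; have w1G0 : w 1%N * G 0 k = - (w 0%N * G 1 k).
    by rewrite /w -!mulrA rows01 //; ring.
  have : w 1%N * G 0 k <= 0 by rewrite w1G0 oppr_le0 mulr_ge0 ?G_ge0 // ltW // w_gt0.
  rewrite pmulr_rle0 ?w_gt0 // => G0k_le0.
  by apply: le_anti; rewrite G0k_le0 G_ge0.
by have := w_gt0 0%N isT; rewrite /alt_rowsum !row0_eq0 // oppr0 !addr0 mulr0 ltxx.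
Qed.

End AlternatingPattern.

Section KernelMatrix.
Variable R : realType.
Implicit Types (K : R -> nat -> R) (mu : nat -> R) (W : nat -> nat -> R).

Definition kernel_mx K mu W N i j := \sum_(k < N) K (mu i) k * W j k.

Variables (K : R -> nat -> R) (mu : nat -> R) (W : nat -> nat -> R) (N : nat).
Hypotheses (mu_gt0 : forall i, (i < 3)%N -> 0 < mu i)
  (mu_incr : forall i i', (i < i' < 3)%N -> mu i < mu i')
  (W_ge0 : forall j k, 0 <= W j k)
  (W_ordered : forall j j' k k', (j < j')%N -> W j k != 0 -> W j' k' != 0 -> (k < k')%N).

Lemma kernel_mx_minor e2 i i' j j' : sr_order K 2 e2 -> (i < i' < 3)%N -> (j < j' < 3)%N ->
  0 <= e2 * minor2 (kernel_mx K mu W N) i i' j j'.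
Proof.
move=> srK /andP[ii' i'3] /andP[jj' j'3]; rewrite /minor2 /kernel_mx.
have := sr_order_compose (N := N) (mu := fun a : 'I_2 => mu (nth 0%N [:: i; i'] a))
  (W := fun (b : 'I_2) (k : 'I_N) => W (nth 0%N [:: j; j'] b) k) srK.
rewrite det_mx22 !mxE /=; apply.
- by move=> [[|[|]]] //= _; apply: mu_gt0; rewrite ?(ltn_trans ii').
- by move=> [[|[|]]] // ? [[|[|]]] //= ? _; apply: mu_incr; rewrite ii'.
- by move=> b k; exact: W_ge0.
- by move=> [[|[|]]] // ? [[|[|]]] //= ? k k' _; exact: W_ordered.
Qed.

Lemma kernel_mx_det e3 : sr_order K 3 e3 -> 0 <= e3 * det3 (kernel_mx K mu W N).
Proof.
move=> srK; rewrite -det_mx33.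
apply: (sr_order_compose (mu := fun a : 'I_3 => mu a)
  (W := fun (b : 'I_3) (k : 'I_N) => W b k) srK).
- by move=> a; exact: mu_gt0.
- by move=> a a' aa'; apply: mu_incr; rewrite aa' ltn_ord.
- by move=> b k; exact: W_ge0.
- by move=> b b' k k' bb'; exact: W_ordered.
Qed.

End KernelMatrix.

Definition block_index (J : pred nat) k : nat :=
  if J k then 1 else if has J (iota 0 k) then 2 else 0.

Lemma block_index_lt3 J k : (block_index J k < 3)%N.
Proof. by rewrite /block_index; case: ifP => //; case: ifP. Qed.

Lemma block_index_eq1 J k : (block_index J k == 1%N) = J k.
Proof. by rewrite /block_index; case: ifP => //; case: ifP. Qed.

Lemma block_index_mono (J : pred nat) :
  (forall i j l, (i <= j <= l)%N -> J i -> J l -> J j) ->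
  {homo block_index J : k k' / (k <= k')%N}.
Proof.
move=> J_convex k k' kk'; rewrite /block_index.
have has_earlier i l : (i < l)%N -> J i -> has J (iota 0 l).
  by move=> il Ji; apply/hasP; exists i; rewrite ?mem_iota.
case Jk: (J k); case Jk': (J k') => //.
- have kk'_lt : (k < k')%N by rewrite ltn_neqAle kk' andbT; apply: contraFneq Jk' => <-.
  by rewrite (has_earlier k).
- case: ifP => [/hasP[i] | //]; rewrite mem_iota /= => ik Ji.
  by have := J_convex i k k'; rewrite Jk (ltnW ik) kk'; apply.
- case: ifP => [/hasP[i] | //]; rewrite mem_iota /= => ik Ji.
  by rewrite (has_earlier i) // (leq_trans ik).
Qed.

Section BlockWeights.
Variable R : realType.

Definition block_weight (h : nat -> R) j k : R :=
  if block_index (fun k => 0 < h k) k == j then (if j == 1%N then h k else - h k) else 0.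

Lemma block_weight_ge0 h j k : 0 <= block_weight h j k.
Proof.
rewrite /block_weight; case: eqP => // <-.
by rewrite block_index_eq1; case: ltrP => [/ltW|]; rewrite ?oppr_ge0.
Qed.

Lemma block_weight_ordered h :
  (forall i j l, (i <= j <= l)%N -> 0 < h i -> 0 < h l -> 0 < h j) ->
  forall j j' k k', (j < j')%N ->
  block_weight h j k != 0 -> block_weight h j' k' != 0 -> (k < k')%N.
Proof.
move=> /block_index_mono beta_mono j j' k k' jj'; rewrite /block_weight.
case: (_ k =P j) => [bk|_]; last by rewrite eqxx.
case: (_ k' =P j') => [bk'|_]; last by rewrite eqxx.
by move=> _ _; rewrite ltnNge; apply/negP => /beta_mono; rewrite bk bk' leqNgt jj'.
Qed.

Lemma alt_rowsum_block K mu h N i :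
  alt_rowsum (kernel_mx K mu (block_weight h) N) i = \sum_(k < N) K (mu i) k * h k.
Proof.
rewrite /alt_rowsum /kernel_mx -!sumrN -!big_split /=; apply: eq_bigr => k _.
rewrite /block_weight; move: (block_index_lt3 (fun k => 0 < h k) k).
by case: block_index => [|[|[|//]]] _ /=; ring.
Qed.

Lemma kernel_series_alt_pattern K e2 e3 (h mu S : nat -> R) :
  e2 ^+ 2 = 1 -> e3 ^+ 2 = 1 -> sr_order K 2 e2 -> sr_order K 3 e3 ->
  (forall x k, 0 < x -> 0 <= K x k) ->
  (forall i j l, (i <= j <= l)%N -> 0 < h i -> 0 < h l -> 0 < h j) ->
  (forall i, (i < 3)%N -> 0 < mu i) -> (forall i i', (i < i' < 3)%N -> mu i < mu i') ->
  (forall i, (i < 3)%N -> series (fun k => K (mu i) k * h k) @ \oo --> S i) ->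
  ~ (forall i, (i < 3)%N -> 0 < e2 * e3 * (-1) ^+ i * S i).
Proof.
move=> e2sq e3sq srK2 srK3 K_ge0 h_convex mu_gt0 mu_incr S_cvg S_pattern.
have [N N_pattern] : exists N, forall i, (i < 3)%N ->
    0 < e2 * e3 * (-1) ^+ i * \sum_(k < N) K (mu i) k * h k.
  have ev i : (i < 3)%N ->
      \forall n \near \oo, 0 < e2 * e3 * (-1) ^+ i * \sum_(k < n) K (mu i) k * h k.
    move=> i3; have := S_cvg i i3; rewrite seriesEord => cvg_i.
    exact: cvgr_gt (cvgM (cvg_cst _) cvg_i) _ (S_pattern i i3).
  near \oo => N; exists N => -[|[|[|//]]] _; near: N; exact: ev.
have W_ordered := block_weight_ordered h_convex.
apply: (det3_alt_rowsum_pattern (G := kernel_mx K mu (block_weight h) N) e2sq e3sq).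
- move=> i j i3 _; apply: sumr_ge0 => k _.
  by rewrite mulr_ge0 ?block_weight_ge0 ?K_ge0 ?mu_gt0.
- move=> i i' j j' ii' jj'.
  exact (kernel_mx_minor N mu_gt0 mu_incr (@block_weight_ge0 h) W_ordered srK2 ii' jj').
- exact (kernel_mx_det N mu_gt0 mu_incr (@block_weight_ge0 h) W_ordered srK3).
- by move=> i i3; rewrite alt_rowsum_block N_pattern.
Unshelve. all: by end_near.
Qed.

End BlockWeights.

Section SeriesTails.
Variable R : realType.
Implicit Types u w : R ^nat.

Lemma series_le_limn u n : (forall k, 0 <= u k) -> cvgn (series u) ->
  series u n <= limn (series u).
Proof.
move=> u_ge0 u_cvg; apply: nondecreasing_cvgn_le => //.
by apply/nondecreasing_seqP => k; rewrite /series /= big_nat_recr //= lerDl.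
Qed.

Lemma series_tail_le u w N : (forall k, 0 <= u k) -> (forall k, u k <= w k) ->
  cvgn (series u) -> cvgn (series w) ->
  limn (series u) - series u N <= limn (series w) - series w N.
Proof.
move=> u_ge0 uw u_cvg w_cvg; have w_ge0 k : 0 <= w k := le_trans (u_ge0 k) (uw k).
suff : limn (series u) <= series u N + (limn (series w) - series w N) by lra.
apply: limr_le => //; near=> n.
have Nn : (N <= n)%N by near: n; exact: nbhs_infty_ge.
have : series w n <= limn (series w) by exact: series_le_limn.
have : \sum_(N <= k < n) u k <= \sum_(N <= k < n) w k by apply: ler_sum => k _.
rewrite /series /= !(@big_cat_nat _ _ _ N 0 n) //=; lra.
Unshelve. all: by end_near.
Qed.

Lemma kernel_le_endpoints (K : R -> nat -> R) (e a b x : R) k :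
  (e = 1 \/ e = -1) -> (forall x k, 0 < x -> 0 <= K x k) ->
  (forall k x y, 0 < x -> x < y -> 0 <= e * (K y k - K x k)) ->
  0 < a -> a <= x <= b -> K x k <= K a k + K b k.
Proof.
move=> e_sign K_ge0 K_mono a_gt0 /andP[ax xb]; have x_gt0 := lt_le_trans a_gt0 ax.
have K_le y z : 0 < y -> y <= z -> e * K y k <= e * K z k.
  move=> y_gt0; rewrite le_eqVlt => /predU1P[-> // | yz].
  by rewrite -subr_ge0 -mulrBr K_mono.
case: e_sign => e_val.
  have := K_le x _ x_gt0 xb; rewrite e_val !mul1r => /le_trans; apply.
  by rewrite lerDr K_ge0 ?(lt_le_trans x_gt0 xb).
have := K_le _ x a_gt0 ax; rewrite e_val !mulN1r lerN2 => /le_trans; apply.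
by rewrite lerDl K_ge0 ?(lt_le_trans x_gt0 xb).
Qed.

Lemma limn_series_param_cvg (K : R -> nat -> R) (A : nat -> R) (e m0 : R) :
  (e = 1 \/ e = -1) -> 0 < m0 ->
  (forall x k, 0 < x -> 0 <= K x k) -> (forall k, 0 <= A k) ->
  (forall k x y, 0 < x -> x < y -> 0 <= e * (K y k - K x k)) ->
  (forall k, K x k @[x --> m0] --> K m0 k) ->
  (forall x, 0 < x -> cvgn (series (fun k => K x k * A k))) ->
  limn (series (fun k => K x k * A k)) @[x --> m0] --> limn (series (fun k => K m0 k * A k)).
Proof.
move=> e_sign m0_gt0 K_ge0 A_ge0 K_mono K_cont S_cvg.
have a_gt0 : 0 < m0 / 2 by lra.
pose U k := (K (m0 / 2) k + K (m0 * 2) k) * A k.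
have U_cvg : cvgn (series U).
  rewrite (_ : U = (fun k => K (m0 / 2) k * A k) + (fun k => K (m0 * 2) k * A k)).
    by apply: is_cvg_seriesD; apply: S_cvg; lra.
  by apply/funext => k; rewrite /U mulrDl.
have tail_bound x N : m0 / 2 <= x <= m0 * 2 ->
    0 <= limn (series (fun k => K x k * A k)) - series (fun k => K x k * A k) N
      <= limn (series U) - series U N.
  move=> x_ab; have x_gt0 : 0 < x by case/andP: x_ab => ax _; exact: lt_le_trans ax.
  have KA_ge0 k : 0 <= K x k * A k by rewrite mulr_ge0 ?K_ge0.
  apply/andP; split; first by rewrite subr_ge0; exact: series_le_limn KA_ge0 (S_cvg x x_gt0).
  apply: series_tail_le KA_ge0 _ (S_cvg x x_gt0) U_cvg => k.
  by rewrite ler_wpM2r ?(kernel_le_endpoints _ e_sign K_ge0 K_mono a_gt0).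
apply/cvgrPdist_lt => eps eps_gt0; have eps3_gt0 : 0 < eps / 3 by lra.
have /cvgrPdist_lt/(_ _ eps3_gt0)[N _ tailN] := U_cvg.
have PN_cvg : \sum_(k < N) K x k * A k @[x --> m0] --> \sum_(k < N) K m0 k * A k.
  apply: (@cvg_big _ _ +%R 0 xpredT _ _ (nbhs m0) _ (fun (k : 'I_N) x => K x k * A k)).
    exact: add_continuous.
  by move=> k _; exact: cvgM (K_cont k) (cvg_cst _).
near=> x.
have x_ab : m0 / 2 <= x <= m0 * 2.
  near: x; have : m0 \in `]m0 / 2, m0 * 2[ by rewrite in_itv /=; apply/andP; split; lra.
  move/near_in_itvoo; apply: filterS => y; rewrite in_itv /= => /andP[ay yb].
  by rewrite !ltW.
have P_close : `|series (fun k => K m0 k * A k) N - series (fun k => K x k * A k) N| < eps / 3.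
  by rewrite !seriesEord /=; near: x; move/cvgrPdist_lt: PN_cvg; apply.
have /andP[? ?] := tail_bound x N x_ab.
have /andP[? ?] : 0 <= limn (series (fun k => K m0 k * A k)) - series (fun k => K m0 k * A k) N
    <= limn (series U) - series U N by apply: tail_bound; apply/andP; split; lra.
have := tailN N (leqnn N); move: P_close; rewrite !ltr_norml => /andP[? ?] /andP[? ?].
apply/andP; split; lra.
Unshelve. all: by end_near.
Qed.

End SeriesTails.

Section Unimodality.
Variable R : realType.
Implicit Types f : R -> R.

Lemma near_left_point (P : R -> Prop) (t u : R) : (\forall y \near t, P y) -> u < t ->
  exists v, [/\ u < v, v < t & P v].
Proof.
move=> /nbhs_ballP[d /= d_gt0 dP] ut.
have [M [M_gt0 Md Mtu]] : exists M, [/\ 0 < M, M <= d & M <= t - u].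
  by exists (Num.min d (t - u)); rewrite lt_min d_gt0 subr_gt0 ut !ge_min !lexx ?orbT.
exists (t - M / 2); split; [lra | lra | apply: dP].
rewrite /ball /= (_ : t - (t - M / 2) = M / 2); last by ring.
by rewrite ger0_norm; lra.
Qed.

Lemma near_right_point (P : R -> Prop) (t w : R) : (\forall y \near t, P y) -> t < w ->
  exists v, [/\ t < v, v < w & P v].
Proof.
move=> /nbhs_ballP[d /= d_gt0 dP] tw.
have [M [M_gt0 Md Mwt]] : exists M, [/\ 0 < M, M <= d & M <= w - t].
  by exists (Num.min d (w - t)); rewrite lt_min d_gt0 subr_gt0 tw !ge_min !lexx ?orbT.
exists (t + M / 2); split; [lra | lra | apply: dP].
rewrite /ball /= (_ : t - (t + M / 2) = - (M / 2)); last by ring.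
by rewrite normrN ger0_norm; lra.
Qed.

Lemma unimodal_pos_signr f s : (s = 1 \/ s = -1) ->
  unimodal_pos (fun x => s * f x) -> unimodal_pos f.
Proof.
case=> ->; first by rewrite (_ : (fun x => 1 * f x) = f) // funeqE => x; rewrite mul1r.
case=> t [[up down]|[down up]]; exists t; [right|left]; split=> u v *;
  rewrite -lerN2 -[- f u]mulN1r -[- f v]mulN1r;
  [exact: up | exact: down | exact: down | exact: up].
Qed.

Definition descent_set f := [set v | exists u, [/\ 0 < u, u < v & f v < f u]].

Lemma no_valley_nonincr f :
  (forall u v w, 0 < u -> u < v -> v < w -> ~ (f v < f u /\ f v < f w)) ->
  has_inf (descent_set f) -> forall u v, inf (descent_set f) < u -> u < v -> f v <= f u.
Proof.
move=> no_valley S_inf u v tu uv; rewrite leNgt; apply/negP => fuv.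
have [v' [u' [u'_gt0 u'v' fv'u']] v'u] :
    exists2 v', descent_set f v' & v' < inf (descent_set f) + (u - inf (descent_set f)).
  by apply: inf_adherent; rewrite ?subr_gt0.
rewrite addrC subrK in v'u.
have fvv' : f v <= f v'.
  rewrite leNgt; apply/negP => fv'v.
  exact: no_valley u' v' v u'_gt0 u'v' (lt_trans v'u uv) (conj fv'u' fv'v).
have fv'u : f v' <= f u.
  rewrite leNgt; apply/negP => fuv'.
  exact: no_valley v' u v (lt_trans u'_gt0 u'v') v'u uv (conj fuv' fuv).
by move: fuv; rewrite ltNge (le_trans fvv' fv'u).
Qed.

Lemma no_valley_unimodal f :
  (forall t : R, 0 < t -> f x @[x --> t] --> f t) ->
  (forall u v w, 0 < u -> u < v -> v < w -> ~ (f v < f u /\ f v < f w)) ->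
  unimodal_pos f.
Proof.
move=> f_cont no_valley.
have strict u v : u <= v -> f u != f v -> u < v.
  by rewrite le_eqVlt => /predU1P[->|//]; rewrite eqxx.
have [[v0 Sv0]|S0] := pselect (exists v, descent_set f v); last first.
  exists 0; right; split=> [u v u_gt0 uv v_le0|u v u_gt0 _ uv]; first lra.
  rewrite leNgt; apply/negP => fvu; apply: S0; exists v, u; split=> //.
  exact: strict _ _ uv (negbT (gt_eqF fvu)).
have S_lb : lbound (descent_set f) 0.
  by move=> v [u [u_gt0 uv _]]; rewrite ltW ?(lt_trans u_gt0).
have S_inf : has_inf (descent_set f) by split; [exists v0 | exists 0].
have decr_after := no_valley_nonincr no_valley S_inf.
have inf_le v : descent_set f v -> inf (descent_set f) <= v.
  by move=> Sv; apply: (ge_inf S_inf.2).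
set t := inf (descent_set f) in decr_after inf_le *.
exists t; left; split.
  move=> u v u_gt0 uv vt; rewrite leNgt; apply/negP => fvu.
  have uv' := strict _ _ uv (negbT (gt_eqF fvu)).
  have tv : t <= v by apply: inf_le; exists u.
  have vt' : v = t by apply: le_anti; rewrite vt tv.
  rewrite {}vt' in fvu uv'; have t_gt0 := lt_trans u_gt0 uv'.
  have [w [uw wt fwu]] := near_left_point (cvgr_lt _ (f_cont t t_gt0) _ fvu) uv'.
  by have := inf_le w (ex_intro _ u (And3 u_gt0 uw fwu)); rewrite leNgt wt.
move=> u v u_gt0 tu uv; case: (ltrP t u) => [tu'|ut].
  by move: uv; rewrite le_eqVlt => /predU1P[-> //|]; exact: decr_after.
have {}ut : u = t by apply: le_anti; rewrite ut tu.
rewrite {}ut in u_gt0 tu uv *.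
rewrite leNgt; apply/negP => ftv.
have tv := strict _ _ uv (negbT (lt_eqF ftv)).
have [w [tw wv fwv]] := near_right_point (cvgr_lt _ (f_cont t u_gt0) _ ftv) tv.
by have := decr_after w v tw wv; rewrite leNgt fwv.
Qed.

End Unimodality.

Section KernelSeriesRatio.
Variable R : realType.
Variables (K : R -> nat -> R) (A B : nat -> R) (e1 e2 e3 : R).
Hypotheses (e1_sign : e1 = 1 \/ e1 = -1) (e2_sign : e2 = 1 \/ e2 = -1)
  (e3_sign : e3 = 1 \/ e3 = -1).
Hypotheses (srK1 : sr_order K 1 e1) (srK2 : sr_order K 2 e2) (srK3 : sr_order K 3 e3).
Hypothesis K_0 : forall x, 0 < x -> K x 0 = 1.
Hypothesis K_cont : forall k (x : R), 0 < x -> K y k @[y --> x] --> K x k.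
Hypotheses (A_gt0 : forall k, 0 < A k) (B_gt0 : forall k, 0 < B k).
Hypothesis ratio_convex : forall lam i j l, (i <= j <= l)%N ->
  lam < A i / B i -> lam < A l / B l -> lam < A j / B j.
Hypotheses (A_cvg : forall x, 0 < x -> cvgn (series (fun k => K x k * A k)))
  (B_cvg : forall x, 0 < x -> cvgn (series (fun k => K x k * B k))).

Let num x := limn (series (fun k => K x k * A k)).
Let den x := limn (series (fun k => K x k * B k)).
Let K_ge0 := sr_order1_ge0 srK1 e1_sign K_0.

Let series_cont (C : nat -> R) : (forall k, 0 < C k) ->
  (forall x, 0 < x -> cvgn (series (fun k => K x k * C k))) -> forall x : R, 0 < x ->
  limn (series (fun k => K y k * C k)) @[y --> x] --> limn (series (fun k => K x k * C k)).
Proof.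
move=> C_gt0 C_cvg x x_gt0; apply: (limn_series_param_cvg e2_sign x_gt0 K_ge0 _ _ _ C_cvg).
- by move=> k; exact/ltW/C_gt0.
- by move=> k y z y_gt0 yz; apply: sr_order2_mono srK2 K_0 y_gt0 yz.
- by move=> k; exact (@K_cont k x x_gt0).
Qed.

Let den_gt0 (x : R) : 0 < x -> 0 < den x.
Proof.
move=> x_gt0; have KB_ge0 k : 0 <= K x k * B k by rewrite mulr_ge0 ?K_ge0 ?ltW.
have := series_le_limn 1 KB_ge0 (B_cvg x_gt0).
by rewrite /series /= big_nat1 K_0 // mul1r; exact: lt_le_trans (B_gt0 0).
Qed.

Lemma kernel_series_ratio_no_valley (x0 x1 x2 : R) : 0 < x0 -> x0 < x1 -> x1 < x2 ->
  let F x := e2 * e3 * (num x / den x) in ~ (F x1 < F x0 /\ F x1 < F x2).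
Proof.
move=> x0_gt0 x01 x12 F [F10 F12]; set sg := e2 * e3 in F F10 F12.
have sg2 : sg * sg = 1 by rewrite /sg; case: e2_sign => ->; case: e3_sign => ->; ring.
pose lam' := (F x1 + Num.min (F x0) (F x2)) / 2; pose lam := sg * lam'.
have [lam'_gt lam'_lt0 lam'_lt2] : [/\ F x1 < lam', lam' < F x0 & lam' < F x2].
  have := ge_min (F x0) (F x0) (F x2); have := ge_min (F x2) (F x0) (F x2).
  rewrite !lexx orbT /lam' => m2 m0; have : F x1 < Num.min (F x0) (F x2) by rewrite lt_min F10.
  by move=> m; split; lra.
pose mu i := nth 0 [:: x0; x1; x2] i.
have mu_gt0 i : (i < 3)%N -> 0 < mu i.
  by case: i => [|[|[|//]]] _ //=; [exact: lt_trans x01 | exact: lt_trans (lt_trans x01 x12)].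
have key i : (i < 3)%N -> sg * (num (mu i) - lam * den (mu i)) = den (mu i) * (F (mu i) - lam').
  move=> i3; rewrite /F /lam -/sg.
  transitivity (sg * num (mu i) - (sg * sg) * lam' * den (mu i)); first by ring.
  by rewrite sg2 mul1r; field; exact: lt0r_neq0 (den_gt0 (mu_gt0 i i3)).
apply: (kernel_series_alt_pattern (h := fun k => A k - lam * B k) (mu := mu)
  (S := fun i => num (mu i) - lam * den (mu i)) _ _ srK2 srK3 K_ge0).
- by have [->|->] := e2_sign; rewrite ?sqrrN expr1n.
- by have [->|->] := e3_sign; rewrite ?sqrrN expr1n.
- have h_pos k : (0 < A k - lam * B k) = (lam < A k / B k).
    by rewrite subr_gt0 ltr_pdivlMr.
  by move=> i j l ijl; rewrite !h_pos; apply: ratio_convex.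
- exact: mu_gt0.
- move=> i i' /andP[ii' i'3]; case: i' i'3 ii' => [|[|[|//]]] _; case: i => [|[|//]] //= _;
    by rewrite /mu /= ?(lt_trans x01 x12).
- move=> i i3; rewrite (_ : series _ = fun n =>
    series (fun k => K (mu i) k * A k) n - lam * series (fun k => K (mu i) k * B k) n).
    exact: cvgB (A_cvg (mu_gt0 i i3)) (cvgM (cvg_cst _) (B_cvg (mu_gt0 i i3))).
  apply/funext => n; rewrite /series /= mulr_sumr -sumrB.
  by apply: eq_bigr => k _; ring.
- move=> i i3; rewrite mulrAC key // -mulrA pmulr_rgt0 ?den_gt0 ?mu_gt0 //.
  by case: i i3 => [|[|[|//]]] _; rewrite /= ?expr0 ?expr1 ?sqrrN ?expr1n ?mulr1 ?mulrN1
    ?oppr_gt0 ?subr_gt0 ?subr_lt0.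
Qed.

Theorem kernel_series_ratio_unimodal : unimodal_pos (fun x => num x / den x).
Proof.
have F_cont (x : R) : 0 < x -> num y / den y @[y --> x] --> num x / den x.
  move=> x_gt0; apply: cvgM (series_cont A_gt0 A_cvg x_gt0) _.
  exact: cvgV (lt0r_neq0 (den_gt0 x_gt0)) (series_cont B_gt0 B_cvg x_gt0).
apply: (@unimodal_pos_signr _ _ (e2 * e3)).
  by have [->|->] := e2_sign; have [->|->] := e3_sign; rewrite ?mulN1r ?opprK ?mul1r;
    [left|right|right|left].
apply: no_valley_unimodal => [x x_gt0 | u v w u_gt0 uv vw].
  exact: cvgM (cvg_cst _) (F_cont x x_gt0).
exact: kernel_series_ratio_no_valley.
Qed.

End KernelSeriesRatio.

Section HypergeometricTerms.
Variable R : realType.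
Implicit Types (a b c d : seq R) (x : R).

Lemma hypterm_cat c d a b x k :
  hypterm (c ++ a) (d ++ b) x k = vpoch c k / vpoch d k * hypterm a b x k.
Proof. by rewrite /hypterm !vpoch_cat invfM; ring. Qed.

Lemma hypterm_gt0 a b x k : all (> 0) a -> all (> 0) b -> 0 < x -> 0 < hypterm a b x k.
Proof.
move=> a_gt0 b_gt0 x_gt0.
by rewrite /hypterm !(divr_gt0, mulr_gt0) ?vpoch_gt0 ?exprn_gt0 ?ltr0n ?fact_gt0.
Qed.

Lemma hypterm_ratio a1 a2 b1 b2 x k :
  all (> 0) a2 -> all (> 0) b1 -> all (> 0) b2 -> 0 < x ->
  hypterm a1 b1 x k / hypterm b2 a2 x k = vpoch_ratio (a1 ++ a2) (b1 ++ b2) k.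
Proof.
move=> a2_gt0 b1_gt0 b2_gt0 x_gt0; rewrite /hypterm /vpoch_ratio !vpoch_cat.
have := vpoch_gt0 k a2_gt0; have := vpoch_gt0 k b1_gt0; have := vpoch_gt0 k b2_gt0.
have : 0 < x ^+ k by rewrite exprn_gt0.
have : (0 < k`!%:R :> R) by rewrite ltr0n fact_gt0.
by move=> *; field; rewrite !gt_eqF.
Qed.

Lemma vpoch_vshift_continuous c k : continuous (fun x : R => vpoch (vshift c x) k).
Proof.
rewrite (_ : (fun x => _) = fun x => \prod_(ci <- c) \prod_(i < k) (ci + x + i%:R)); last first.
  by apply/funext => x; rewrite /vpoch /vshift big_map.
apply: continuous_big => [|ci _]; first exact: mul_continuous.
apply: continuous_big => [|i _ x]; first exact: mul_continuous.
by apply: cvgD (cvg_cst _); apply: cvgD (cvg_cst _) cvg_id.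
Qed.

End HypergeometricTerms.

Theorem theorem5 (R : realType) (c d a1 a2 b1 b2 : seq R) (x : R) :
  sign_regular3 (fun mu n => vpoch (vshift c mu) n / vpoch (vshift d mu) n) ->
  (forall mu : R, 0 < mu -> forall k : nat, vpoch (vshift d mu) k != 0) ->
  all (fun y => 0 < y) a1 -> all (fun y => 0 < y) a2 ->
  all (fun y => 0 < y) b1 -> all (fun y => 0 < y) b2 ->
  0 < x ->
  (forall mu : R, 0 < mu ->
     hypconv (vshift c mu ++ a1) (vshift d mu ++ b1) x) ->
  (forall mu : R, 0 < mu ->
     hypconv (vshift c mu ++ b2) (vshift d mu ++ a2) x) ->
  (forall mu : R, 0 < mu ->
     hypF (vshift c mu ++ b2) (vshift d mu ++ a2) x != 0) ->
  (size (a1 ++ a2) <= size (b1 ++ b2))%N ->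
  (forall k : nat, (k < size (a1 ++ a2))%N ->
     elem_sym (b1 ++ b2) (size (b1 ++ b2) - k) / elem_sym (a1 ++ a2) (size (a1 ++ a2) - k)
     <= elem_sym (b1 ++ b2) (size (b1 ++ b2) - k.+1)
        / elem_sym (a1 ++ a2) (size (a1 ++ a2) - k.+1)) ->
  unimodal_pos (fun mu : R =>
     hypF (vshift c mu ++ a1) (vshift d mu ++ b1) x
     / hypF (vshift c mu ++ b2) (vshift d mu ++ a2) x).
Proof.
move=> [e1 [e2 [e3 [e1_sign e2_sign e3_sign [sr1 sr2 sr3]]]]] d_neq0 a1_gt0 a2_gt0 b1_gt0 b2_gt0
  x_gt0 num_cvg den_cvg _ size_ab elem_sym_mono.
pose K mu n := vpoch (vshift c mu) n / vpoch (vshift d mu) n.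
have hypterm_K top bot mu :
    hypterm (vshift c mu ++ top) (vshift d mu ++ bot) x = fun k => K mu k * hypterm top bot x k.
  by apply/funext => k; rewrite hypterm_cat.
have a_gt0 : all (> 0) (a1 ++ a2) by rewrite all_cat; apply/andP.
have b_gt0 : all (> 0) (b1 ++ b2) by rewrite all_cat; apply/andP.
rewrite /hypF; under eq_fun do rewrite !hypterm_K.
apply: (kernel_series_ratio_unimodal e1_sign e2_sign e3_sign sr1 sr2 sr3).
- by move=> mu _; rewrite /K !vpoch0 divr1.
- move=> k mu mu_gt0; rewrite /K.
  exact (cvgM (@vpoch_vshift_continuous _ c k mu)
    (cvgV (d_neq0 mu mu_gt0 k) (@vpoch_vshift_continuous _ d k mu))).
- by move=> k; apply: hypterm_gt0.
- by move=> k; apply: hypterm_gt0.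
- move=> lam i j l ijl; rewrite !hypterm_ratio //.
  exact (vpoch_ratio_superlevel_convex a_gt0 b_gt0 size_ab elem_sym_mono ijl).
- by move=> mu mu_gt0; rewrite -hypterm_K; exact: num_cvg.
- by move=> mu mu_gt0; rewrite -hypterm_K; exact: den_cvg.
Qed.
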